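(* Let $\mathcal Y\subset\mathbb R^d$ be finite with no element a strict convex combination of others, $Y$ the matrix with columns $y\in\mathcal Y$, $\mathcal C=\operatorname{conv}(\mathcal Y)$, and $V$ the direction of $\operatorname{aff}(\mathcal Y)$. Let $\Omega_\Delta$ be a proper l.s.c. convex function on $\mathbb R^{\mathcal Y}$ with domain $\Delta^{\mathcal Y}$ whose restriction to the affine hull $H_\Delta$ of $\Delta^{\mathcal Y}$ is Legendre-type (w.r.t. the metric of $H_\Delta$). Define $\Omega_{\mathcal C}(\mu):=\min\{\Omega_\Delta(q):q\in\Delta^{\mathcal Y},\ Yq=\mu\}$ for $\mu\in\mathcal C$ (and $+\infty$ otherwise). For $\theta\in\mathbb R^d$ and $q\in\Delta^{\mathcal Y}$ put $s_\theta=Y^\top\theta$, $\mu_q=Yq$. Then: (1) $\langle s_\theta|q\rangle=\langle\theta|\mu_q\rangle$. (2) $\Omega_{\mathcal C}^*(\theta)=\Omega_\Delta^*(Y^\top\theta)$; hence $\operatorname{dom}(\Omega^*_{\mathcal C})=\mathbb R^d$, $\Omega^*_{\mathcal C}$ is differentiable on $\mathbb R^d$ and affine on $V^\perp$. (3) $\Omega_\Delta(q)\ge\Omega_{\mathcal C}(\mu_q)$ and $\mathcal L_{\Omega_\Delta}(s_\theta;q)\ge\mathcal L_{\Omega_{\mathcal C}}(\theta;\mu_q)$, both with equality if and only if $q$ minimizes $\Omega_\Delta$ over $\{q'\in\Delta^{\mathcal Y}:Yq'=\mu_q\}$. (4) $\inf_{\theta'}\mathcal L_{\Omega_\Delta}(s_{\theta'};q)\ge\inf_{\theta'}\mathcal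 L_{\Omega_{\mathcal C}}(\theta';\mu_q)$, with equality if and only if $q$ minimizes $\Omega_\Delta$ over $\{q'\in\Delta^{\mathcal Y}:Yq'=\mu_q\}$. (5) $\nabla_\theta\mathcal L_{\Omega_\Delta}(s_\theta;q)=\nabla_\theta\mathcal L_{\Omega_{\mathcal C}}(\theta;\mu_q)=Y(\nabla\Omega_\Delta^*(s_\theta)-q)=\nabla\Omega^*_{\mathcal C}(\theta)-\mu_q$.
   Context: $\Delta^{\mathcal Y}$ is the probability simplex in $\mathbb R^{\mathcal Y}$. Legendre-type: strictly convex on the interior of its domain and essentially smooth (nonempty interior, differentiable there, gradient norm blowing up at the boundary of the domain). ${}^*$ denotes Fenchel conjugation and for a convex $\Omega$, $\mathcal L_\Omega(\theta;\mu)=\Omega(\mu)+\Omega^*(\theta)-\langle\theta|\mu\rangle$ is its Fenchel–Young loss. *)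

From HB Require Import structures.
From mathcomp Require Import all_boot all_order all_algebra.
From mathcomp Require Import all_classical all_reals all_analysis.
Set Implicit Arguments. Unset Strict Implicit. Unset Printing Implicit Defensive.
Import Order.TTheory GRing.Theory Num.Theory.
Import numFieldNormedType.Exports.
Local Open Scope classical_set_scope.
Local Open Scope ring_scope.

Definition dotv (R : realType) (k : nat) (u v : 'cV[R]_k) : R :=
  \sum_(i < k) u i 0 * v i 0.

(* Probability simplex Delta^Y, Y indexed by 'I_n (R^Y = 'cV[R]_n). *)
Definition simplex (R : realType) (n : nat) : set 'cV[R]_n :=
  [set q | (forall i, 0 <= q i 0) /\ \sum_(i < n) q i 0 = 1].

Definition relint_simplex (R : realType) (n : nat) : set 'cV[R]_n :=
  [set q | (forall i, 0 < q i 0) /\ \sum_(i < n) q i 0 = 1].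

Definition projV0 (R : realType) (n : nat) (v : 'cV[R]_n) : 'cV[R]_n :=
  v - ((\sum_(i < n) v i 0) / n%:R) *: const_mx 1.

Local Open Scope ereal_scope.

Definition eproper (R : realType) (k : nat) (f : 'cV[R]_k -> \bar R) :=
  (forall x, f x != -oo) /\ (exists x, f x < +oo).

Definition econvex (R : realType) (k : nat) (f : 'cV[R]_k -> \bar R) :=
  forall (x y : 'cV[R]_k) (t : R), (0 < t < 1)%R ->
    f (t *: x + (1 - t) *: y)%R <= t%:E * f x + (1 - t)%:E * f y.

Definition edom (R : realType) (k : nat) (f : 'cV[R]_k -> \bar R) : set 'cV[R]_k :=
  [set x | f x < +oo].

Definition fconj (R : realType) (k : nat) (f : 'cV[R]_k -> \bar R)
  (theta : 'cV[R]_k) : \bar R :=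
  ereal_sup [set (dotv theta mu)%:E - f mu | mu in [set: 'cV[R]_k]].

Definition FYloss (R : realType) (k : nat) (f : 'cV[R]_k -> \bar R)
  (theta mu : 'cV[R]_k) : \bar R :=
  f mu + fconj f theta - (dotv theta mu)%:E.

Definition OmegaC (R : realType) (d n : nat) (Y : 'M[R]_(d, n))
  (f : 'cV[R]_n -> \bar R) (mu : 'cV[R]_d) : \bar R :=
  ereal_inf [set f q | q in [set q | simplex q /\ (Y *m q)%R = mu]].

Local Close Scope ereal_scope.

Definition has_grad (R : realType) (k : nat) (f : 'cV[R]_k -> R) (x g : 'cV[R]_k) :=
  differentiable f x /\ forall v, 'd f x v = dotv g v.

(* g is the gradient at q (in H_Delta, w.r.t. the metric of H_Delta) of the
   restriction of f to H_Delta: the restriction is parametrised by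
   v |-> q + projV0 v, and g lies in the direction of H_Delta automatically. *)
Definition gradH (R : realType) (n : nat) (f : 'cV[R]_n -> \bar R) (q g : 'cV[R]_n) :=
  has_grad (fun v => fine (f (q + projV0 v))) 0 g.

(* Restriction of f to H_Delta = {q | sum q = 1} is of Legendre type,
   given that dom f = Delta (so the interior of the domain inside H_Delta is
   relint_simplex, and its boundary inside H_Delta is simplex \ relint_simplex). *)
Definition legendre_on_H (R : realType) (n : nat) (f : 'cV[R]_n -> \bar R) :=
  (forall (x y : 'cV[R]_n) (t : R), relint_simplex x -> relint_simplex y ->
     x != y -> 0 < t < 1 ->
     (f (t *: x + (1 - t) *: y)%R < t%:E * f x + (1 - t)%:E * f y)%E) /\
  (exists q : 'cV[R]_n, relint_simplex q) /\
  (forall q, relint_simplex q -> exists g, gradH f q g) /\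
  (forall (u g : nat -> 'cV[R]_n) (qb : 'cV[R]_n),
     (forall k, relint_simplex (u k)) -> (forall k, gradH f (u k) (g k)) ->
     u @ \oo --> qb -> simplex qb -> ~ relint_simplex qb ->
     (fun k => Num.sqrt (dotv (g k) (g k))) @ \oo --> +oo).

Definition Vperp (R : realType) (d n : nat) (Y : 'M[R]_(d, n)) : set 'cV[R]_d :=
  [set w | forall i j : 'I_n, dotv w (col i Y - col j Y) = 0].

(* Since dom Ω_Δ is the compact simplex and Ω_Δ is lower semicontinuous, the
   supremum defining Ω_Δ*(s) is attained, so Ω_Δ* is finite everywhere.  A
   maximiser lies in the relative interior: along the segment from the
   barycenter to a boundary maximiser, the subgradient inequality keeps the
   gradients of Ω_Δ bounded, against essential smoothness.  Strict convexity
   then makes the maximiser q(s) unique, compactness makes it depend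
   continuously on s, and Danskin's argument gives ∇Ω_Δ*(s) = q(s).
   Conjugation commutes with the marginalisation Ω_C(μ) = min {Ω_Δ(q) | Yq = μ},
   so Ω_C* = Ω_Δ* ∘ Yᵀ; for w ∈ V^⊥ the linear form Yᵀw is constant on the
   simplex, whence Ω_C* is affine on V^⊥.  Finally the two Fenchel–Young losses
   differ by the constant Ω_Δ(q) − Ω_C(Yq) ≥ 0, which vanishes exactly when q
   minimises Ω_Δ on its fiber. *)

From HB Require Import structures.
From mathcomp Require Import all_boot all_order all_algebra.
From mathcomp Require Import all_classical all_reals all_analysis.
From mathcomp Require Import ring lra.
Import Order.TTheory GRing.Theory Num.Theory.
Import numFieldNormedType.Exports.
Local Open Scope classical_set_scope.
Local Open Scope ring_scope.
Set Implicit Arguments. Unset Strict Implicit. Unset Printing Implicit Defensive.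

Section inner_product.
Context {R : realType}.

Lemma mx_entry_le_norm (m k : nat) (v : 'M[R]_(m, k)) i j : `|v i j| <= `|v|.
Proof.
rewrite [leRHS]/Num.norm /= mx_normrE.
exact: (le_bigmax _ (fun ij : 'I_m * 'I_k => `|v ij.1 ij.2|) (i, j)).
Qed.

Lemma mx_norm_le (m k : nat) (v : 'M[R]_(m, k)) (c : R) :
  0 <= c -> (forall i j, `|v i j| <= c) -> `|v| <= c.
Proof.
move=> c0 vc; rewrite [leLHS]/Num.norm /= mx_normrE.
by apply: bigmax_le => // ij _; exact: vc.
Qed.

Lemma mx_norm_trmx (m k : nat) (v : 'M[R]_(m, k)) : `|v^T| = `|v|.
Proof.
apply/eqP; rewrite eq_le; apply/andP; split; apply: mx_norm_le => // i j.
  by rewrite mxE mx_entry_le_norm.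
by have := mx_entry_le_norm v^T j i; rewrite mxE.
Qed.

Section dotv.
Variable k : nat.
Implicit Types u v w : 'cV[R]_k.

Lemma dotvC u v : dotv u v = dotv v u.
Proof. by apply: eq_bigr => i _; rewrite mulrC. Qed.

Lemma dotvDr u v w : dotv u (v + w) = dotv u v + dotv u w.
Proof. by rewrite /dotv -big_split; apply: eq_bigr => i _; rewrite mxE mulrDr. Qed.

Lemma dotvDl u v w : dotv (v + w) u = dotv v u + dotv w u.
Proof. by rewrite dotvC dotvDr !(dotvC u). Qed.

Lemma dotvZr a u v : dotv u (a *: v) = a * dotv u v.
Proof. by rewrite /dotv mulr_sumr; apply: eq_bigr => i _; rewrite mxE mulrCA. Qed.

Lemma dotvZl a u v : dotv (a *: v) u = a * dotv v u.
Proof. by rewrite dotvC dotvZr dotvC. Qed.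

Lemma dotvBr u v w : dotv u (v - w) = dotv u v - dotv u w.
Proof. by rewrite -scaleN1r dotvDr dotvZr mulN1r. Qed.

Lemma dotvBl u v w : dotv (v - w) u = dotv v u - dotv w u.
Proof. by rewrite dotvC dotvBr !(dotvC u). Qed.

Lemma dotv0l u : dotv 0 u = 0.
Proof. by rewrite /dotv big1 // => i _; rewrite mxE mul0r. Qed.

Lemma dotv_delta u j : dotv u (delta_mx j 0) = u j 0.
Proof.
rewrite /dotv (bigD1 j) //= big1 ?addr0 => [|i /negbTE ij]; first by rewrite mxE !eqxx mulr1.
by rewrite mxE ij mulr0.
Qed.

Lemma dotv_const u (c : R) : dotv u (const_mx c) = c * \sum_(i < k) u i 0.
Proof. by rewrite /dotv mulr_sumr; apply: eq_bigr => i _; rewrite mxE mulrC. Qed.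

Lemma dotv_le_norm u v : `|dotv u v| <= k%:R * `|u| * `|v|.
Proof.
rewrite (le_trans (ler_norm_sum _ _ _)) // -mulrA mulr_natl.
have -> : `|u| * `|v| *+ k = \sum_(i < k) `|u| * `|v|.
  by rewrite sumr_const card_ord.
apply: ler_sum => i _.
by rewrite normrM ler_pM // mx_entry_le_norm.
Qed.

Lemma dotv_continuous u : continuous (dotv u).
Proof.
move=> v; apply: (continuous_big (op := +%R)) => [|i _ w]; first exact: add_continuous.
apply: (@continuousM _ _ (cst (u i 0)) (fun v : 'cV[R]_k => v i 0)).
  exact: cst_continuous.
exact: coord_continuous.
Qed.

End dotv.

Lemma dotv_trmx k d (Y : 'M[R]_(d, k)) (th : 'cV[R]_d) v :
  dotv (Y^T *m th) v = dotv th (Y *m v).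
Proof.
rewrite /dotv; under eq_bigr do rewrite mxE big_distrl /=.
rewrite exchange_big /=; apply: eq_bigr => j _.
rewrite mxE big_distrr /=; apply: eq_bigr => i _.
by rewrite mxE mulrCA mulrA [_ * th j 0]mulrC.
Qed.

Lemma has_gradP k (f : 'cV[R]_k -> R) x g :
  has_grad f x g <-> forall eps, 0 < eps -> exists2 del, 0 < del &
    forall h, `|h| < del -> `|f (x + h) - f x - dotv g h| <= eps * `|h|.
Proof.
split=> [[df dfE] eps eps0|approx].
  have /eqaddoP/(_ eps eps0)/nbhs_norm0P[del del0 near_x] := diff_locally df.
  exists del => // h /near_x; rewrite !fctE /= dfE.
  by rewrite [h + x]addrC opprD addrA.
have dotv_lin : linear (dotv g) by move=> a u v; rewrite dotvDr dotvZr.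
pose L : {linear 'cV[R]_k -> R^o} :=
  HB.pack (dotv g) (GRing.isLinear.Build _ _ _ _ _ dotv_lin).
have taylor : (f : 'cV[R]_k -> R^o) \o shift x =
    cst (f x) + (L : _ -> R^o) +o_ (0 : 'cV[R]_k) id.
  apply/eqaddoP => eps /approx[del del0 near_x].
  apply/(nbhs_norm0P (V := 'cV[R]_k)); exists del => // h /= /near_x.
  by rewrite !fctE /= [x + h]addrC opprD addrA.
have L_cont : continuous L := @dotv_continuous k g.
have dfE : 'd f x = L :> (_ -> _) by exact: diff_unique.
by split=> [|v]; [apply/diff_locallyP; rewrite dfE | rewrite dfE].
Qed.

Lemma has_grad_affine k (f : 'cV[R]_k -> R) x g b (a : R) :
  has_grad f x g -> has_grad (fun t => a + f t - dotv t b) x (g - b).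
Proof.
move=> /has_gradP approx; apply/has_gradP => eps /approx[del del0 near_x].
exists del => // h /near_x; congr (`|_| <= _).
by rewrite dotvDl dotvBl (dotvC b h); ring.
Qed.

Lemma has_grad_trmx_comp k d (Y : 'M[R]_(d, k)) (f : 'cV[R]_k -> R) th g :
  has_grad f (Y^T *m th) g -> has_grad (fun t => f (Y^T *m t)) th (Y *m g).
Proof.
move=> /has_gradP approx; apply/has_gradP => eps eps0.
set C := d%:R * `|Y| + 1.
have C0 : 0 < C by rewrite ltr_wpDl // mulr_ge0.
have [del del0 near_th] := approx (eps / C) (divr_gt0 eps0 C0).
have YhC (h : 'cV[R]_d) : `|Y^T *m h| <= C * `|h|.
  apply: mx_norm_le => [|i j]; first by rewrite mulr_ge0 // ltW.
  rewrite !mxE (le_trans (ler_norm_sum _ _ _)) // mulrDl mul1r ler_wpDr //.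
  have -> : d%:R * `|Y| * `|h| = \sum_(l < d) `|Y| * `|h|.
    by rewrite sumr_const card_ord -mulrA mulr_natl.
  by apply: ler_sum => l _; rewrite mxE normrM ler_pM ?mx_entry_le_norm.
exists (del / C) => [|h hdel]; first by rewrite divr_gt0.
have /near_th : `|Y^T *m h| < del.
  by rewrite (le_lt_trans (YhC h)) // mulrC -ltr_pdivlMr.
rewrite mulmxDr dotvC dotv_trmx dotvC => /le_trans; apply.
apply: (le_trans (ler_wpM2l _ (YhC h))); first by rewrite divr_ge0 // ltW.
by rewrite mulrA divfK ?gt_eqF.
Qed.

End inner_product.
Section semicontinuity.
Context {R : realType}.
Local Open Scope ereal_scope.

Lemma EFin_between (a b : \bar R) : a < b -> exists r : R, a < r%:E < b.
Proof.
case: a => [a| |]; case: b => [b| |] //= ab.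
- by exists ((a + b) / 2)%R; rewrite !lte_fin !midf_lt // -lte_fin.
- by exists (a + 1)%R; rewrite lte_fin ltrDl ltr01 ltry.
- by exists (b - 1)%R; rewrite ltNyr lte_fin gtrDl ltrN10.
- by exists 0%R; rewrite ltNyr ltry.
Qed.

Lemma lower_semicontinuousB (T : topologicalType) (f : T -> \bar R) (g : T -> R) :
  lower_semicontinuous f -> continuous g ->
  lower_semicontinuous (fun x => f x - (g x)%:E).
Proof.
move=> f_lsc g_cont x a afgx.
have [b /andP[agb bf]] : exists b : R, (a + g x)%:E < b%:E < f x.
  apply: EFin_between; move: afgx; case: (f x) => //= [r|_]; last by rewrite ltry.
  by rewrite -EFinD !lte_fin ltrBrDr.
have [V Vx Vf] := f_lsc x b bf.
have gV : nbhs (g x) (ball (g x) (b - (a + g x))%R).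
  by apply: nbhsx_ballx; rewrite subr_gt0 -lte_fin.
exists (V `&` g @^-1` ball (g x) (b - (a + g x))%R) => [|y [/Vf bfy]].
  exact: filterI Vx (g_cont _ _ gV).
rewrite /= -ball_normE /= => gyx.
move: bfy; case: (f y) => //= [r|_]; last by rewrite ltry.
rewrite -EFinD !lte_fin ltrBrDr => br.
have := ler_norm (g y - g x); rewrite distrC in gyx; move: agb; rewrite lte_fin; lra.
Qed.

Lemma exists_seq_argmin (X : eqType) (r : X -> R) (x0 : X) (s : seq X) :
  exists2 xm, xm \in x0 :: s & forall x, x \in x0 :: s -> (r xm <= r x)%R.
Proof.
elim: s => [|a s [xm xm_in xm_min]].
  by exists x0 => [|x]; rewrite ?mem_seq1 // => /eqP ->.
have sub : {subset x0 :: s <= [:: x0, a & s]}.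
  by move=> x; rewrite !inE => /orP[] ->; rewrite ?orbT.
have [ra|ar] := leP (r a) (r xm).
  exists a => [|x]; first by rewrite !inE eqxx orbT.
  rewrite !inE => /or3P[x0x|/eqP->//|xs]; apply: le_trans ra (xm_min x _).
    by rewrite inE x0x.
  by rewrite inE xs orbT.
exists xm => [|x]; first exact: sub.
rewrite !inE => /or3P[x0x|/eqP->|xs]; last 2 first.
- exact: ltW.
- by apply: xm_min; rewrite inE xs orbT.
by apply: xm_min; rewrite inE x0x.
Qed.

Lemma lower_semicontinuous_compact_min (T : ptopologicalType) (A : set T)
    (f : T -> \bar R) :
  compact A -> A !=set0 -> lower_semicontinuous f ->
  exists2 x, A x & forall y, A y -> f x <= f y.
Proof.
(* Otherwise the open sets [f > r_x], with f y_x < r_x < f x, cover A; the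
   smallest level r_xm of a finite subcover is exceeded by f y_xm < r_xm. *)
move=> cA [x0 Ax0] f_lsc; apply: contrapT => no_min.
have beaten x : exists ry : R * T, A x -> [/\ A ry.2, f ry.2 < ry.1%:E & ry.1%:E < f x].
  have [Ax|] := pselect (A x); last by exists (0%R, x).
  have [y Ay fyx] : exists2 y, A y & f y < f x.
    apply: contrapT => nlt; apply: no_min; exists x => // y Ay.
    by rewrite leNgt; apply/negP => fyx; apply: nlt; exists y.
  by have [r /andP[fyr rfx]] := EFin_between fyx; exists (r, y).
have [ry ryP] := choice beaten.
pose U x := [set z | (ry x).1%:E < f z].
have U_open x : A x -> open (U x) by move=> _; exact: (lower_semicontinuousP f).1.
have [D DA AD] : finite_subset_cover A U A.
  move: cA; rewrite compact_cover; apply=> // z Az.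
  by exists z => //; have [] := ryP z Az.
have [xm xm_in xm_min] := exists_seq_argmin (fun x => (ry x).1) x0 (finmap.enum_fset D).
have Axm : A xm by move: xm_in; rewrite inE => /predU1P[->|/DA/set_mem].
have [Ay fy _] := ryP xm Axm.
have [x Dx Ux] := AD _ Ay.
have : (ry xm).1%:E <= (ry x).1%:E by rewrite lee_fin xm_min // inE Dx orbT.
by move/(lt_le_trans fy)/lt_trans/(_ Ux); rewrite ltxx.
Qed.

End semicontinuity.
Section simplex.
Context {R : realType} {n : nat}.
Implicit Types q x y z : 'cV[R]_n.

Lemma relint_simplexW q : relint_simplex q -> simplex q.
Proof. by case=> q_gt0 q1; split=> // i; exact: ltW. Qed.

Lemma simplex_n_gt0 q : simplex q -> (0 < n)%N.
Proof. by case: n q => [q [_]|//]; rewrite big_ord0 => /eqP; rewrite eq_sym oner_eq0. Qed.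

Lemma simplex_entry_le1 q i : simplex q -> 0 <= q i 0 <= 1.
Proof.
case=> q_ge0 <-; rewrite q_ge0 (bigD1 i) //= lerDl.
by apply: sumr_ge0 => j _.
Qed.

Lemma simplex_dist_le1 x y : simplex x -> simplex y -> `|x - y| <= 1.
Proof.
move=> sx sy; apply: mx_norm_le => // i j; rewrite !mxE ord1.
have := simplex_entry_le1 i sx; have := simplex_entry_le1 i sy.
by rewrite ler_norml => /andP[? ?] /andP[? ?]; apply/andP; split; lra.
Qed.

Lemma simplex_convex x y (t : R) : simplex x -> simplex y -> 0 <= t <= 1 ->
  simplex (t *: x + (1 - t) *: y).
Proof.
move=> [x_ge0 x1] [y_ge0 y1] /andP[t_ge0 t_le1]; split.
  by move=> i; rewrite !mxE addr_ge0 // mulr_ge0 // subr_ge0.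
under eq_bigr do rewrite !mxE.
by rewrite big_split /= -!mulr_sumr x1 y1 !mulr1 addrC subrK.
Qed.

Lemma simplex_delta j : simplex (delta_mx j 0 : 'cV[R]_n).
Proof.
split=> [i|]; first by rewrite mxE; case: (_ && _).
rewrite (bigD1 j) //= big1 ?addr0 => [|i /negbTE ij]; first by rewrite mxE !eqxx.
by rewrite mxE ij.
Qed.

Definition barycenter : 'cV[R]_n := const_mx n%:R^-1.

Lemma relint_barycenter : (0 < n)%N -> relint_simplex barycenter.
Proof.
move=> n_gt0; split=> [i|]; first by rewrite mxE invr_gt0 ltr0n.
under eq_bigr do rewrite mxE.
by rewrite sumr_const card_ord -[_ *+ _]mulr_natr mulVf // pnatr_eq0 -lt0n.
Qed.

Lemma relint_segment x b (t : R) : simplex x -> relint_simplex b -> 0 < t <= 1 ->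
  relint_simplex (x + t *: (b - x)).
Proof.
move=> [x_ge0 x1] [b_gt0 b1] /andP[t_gt0 t_le1]; split=> [i|].
  have -> : (x + t *: (b - x)) i 0 = (1 - t) * x i 0 + t * b i 0.
    by rewrite !mxE; ring.
  by rewrite ltr_wpDl ?mulr_gt0 // mulr_ge0 // subr_ge0.
under eq_bigr do rewrite !mxE.
rewrite big_split /= -mulr_sumr sumrB x1 b1; ring.
Qed.

Lemma simplex_sumB x y : simplex x -> simplex y -> \sum_(i < n) (x - y) i 0 = 0.
Proof.
by move=> [_ x1] [_ y1]; under eq_bigr do rewrite !mxE; rewrite sumrB x1 y1 subrr.
Qed.

Lemma projV0_id (v : 'cV[R]_n) : \sum_(i < n) v i 0 = 0 -> projV0 v = v.
Proof. by rewrite /projV0 => ->; rewrite mul0r scale0r subr0. Qed.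

Lemma projV0_0 : projV0 (0 : 'cV[R]_n) = 0.
Proof. by rewrite projV0_id // big1 // => i _; rewrite mxE. Qed.

Lemma projV0_const (c : R) : (0 < n)%N -> projV0 (c *: const_mx 1 : 'cV[R]_n) = 0.
Proof.
move=> n_gt0; apply/matrixP => i j; rewrite /projV0 !mxE.
under eq_bigr do rewrite !mxE.
rewrite sumr_const card_ord -mulr_natr; field.
by rewrite pnatr_eq0 -lt0n.
Qed.

Lemma simplex_closed : closed (@simplex R n).
Proof.
have -> : @simplex R n =
    \bigcap_i [set q | 0 <= q i 0] `&` [set q | \sum_(i < n) q i 0 = 1].
  by apply/seteqP; split=> q [q_ge0 q1]; split=> // i; [move=> _|]; exact: q_ge0.
apply: closedI.
  apply: closed_bigI => i _.
  apply: (@preimage_closed _ _ (fun q : 'cV[R]_n => q i 0) [set x | 0 <= x]).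
    by move=> q _; exact: coord_continuous.
  exact: closed_ge.
apply: (@preimage_closed _ _ (fun q : 'cV[R]_n => \sum_(i < n) q i 0) [set x | x = 1]).
  move=> q _; apply: (continuous_big (op := +%R)) => [|i _].
    exact: add_continuous.
  exact: coord_continuous.
exact: closed_eq.
Qed.

Lemma simplex_compact : compact (@simplex R n).
Proof.
have trmx_cont (m : nat) : continuous (fun v : 'rV[R]_m => v^T).
  apply: (@bounded_linear_continuous R _ _ (trmx : {linear 'rV[R]_m -> 'cV[R]_m})).
  apply/linear_boundedP; near=> r => v /=; rewrite mx_norm_trmx.
  by rewrite -[leLHS]mul1r ler_wpM2r //; near: r; apply: nbhs_pinfty_ge; exact: num_real.
pose S := [set v : 'rV[R]_n | simplex v^T].
have -> : @simplex R n = (fun v => v^T) @` S.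
  by apply/seteqP; split=> [q sq|_ [v Sv <-] //]; exists q^T; rewrite /S /= trmxK.
apply: continuous_compact; first exact/continuous_subspaceT/trmx_cont.
have box := @rV_compact R n (fun=> `[0, 1]%classic) (fun=> @segment_compact R 0 1).
apply: (subclosed_compact _ box).
  by apply: preimage_closed simplex_closed => v _; exact: trmx_cont.
move=> v Sv i; have := simplex_entry_le1 i Sv.
by rewrite mxE /= in_itv.
Unshelve. all: by end_near.
Qed.

End simplex.

Section real_lemmas.
Context {R : realType}.

Lemma convex_slope_le (phi : R -> R) (D : R) :
  (forall t : R, 0 < t < 1 -> phi t <= (1 - t) * phi 0 + t * phi 1) ->
  (forall eps : R, 0 < eps -> exists2 del : R, 0 < del &
     forall t : R, 0 < t < del -> `|phi t - phi 0 - t * D| <= eps * t) ->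
  D <= phi 1 - phi 0.
Proof.
move=> phi_cvx phi_der; apply/ler_addgt0Pr => eps /phi_der[del del0 near0].
pose t := Num.min (del / 2) (1 / 2).
have t0 : 0 < t by rewrite lt_min !divr_gt0.
have tdel : t < del by rewrite gt_min; apply/orP; left; lra.
have t1 : t < 1 by rewrite gt_min; apply/orP; right; lra.
have := phi_cvx t; rewrite t0 t1 => /(_ isT) cvx.
have := near0 t; rewrite t0 tdel ler_norml => /(_ isT) /andP[lo _].
have : t * D <= t * (phi 1 - phi 0 + eps) by nra.
by rewrite ler_pM2l.
Qed.

Lemma sum0_norm_le k (g : 'cV[R]_k) (U : R) :
  \sum_(i < k) g i 0 = 0 -> 0 <= U -> (forall i, g i 0 <= U) ->
  Num.sqrt (dotv g g) <= 2 * k%:R * U.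
Proof.
move=> g_sum0 U0 gU; set S := \sum_(i < k) `|g i 0|.
have S0 : 0 <= S by apply: sumr_ge0.
have gg_le : dotv g g <= S ^+ 2.
  rewrite expr2 /dotv mulr_suml; apply: ler_sum => i _.
  rewrite (le_trans (ler_norm _)) // normrM ler_wpM2l //.
  by rewrite /S (bigD1 i) //= lerDl sumr_ge0.
have S_le : S <= 2 * k%:R * U.
  have -> : 2 * k%:R * U = \sum_(i < k) 2 * U by rewrite sumr_const card_ord mulrAC mulr_natr.
  rewrite /S -[X in X <= _]addr0 -[X in _ + X]g_sum0 -big_split /=.
  apply: ler_sum => i _.
  by have := gU i; case: (lerP 0 (g i 0)) => [/ger0_norm|/ltr0_norm] ->; lra.
by rewrite (le_trans _ S_le) // -(ger0_norm S0) -sqrtr_sqr ler_sqrt ?sqr_ge0.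
Qed.

Local Open Scope ereal_scope.

Lemma ereal_inf_addl (T : Type) (A : set T) (a : R) (F : T -> \bar R) :
  ereal_inf [set a%:E + F x | x in A] = a%:E + ereal_inf [set F x | x in A].
Proof.
apply/eqP; rewrite eq_le; apply/andP; split.
  rewrite -leeBlDl //; apply: le_ereal_inf_tmp => _ [x Ax <-].
  by rewrite leeBlDl //; apply: ereal_inf_lbound; exists x.
apply: le_ereal_inf_tmp => _ [x Ax <-]; apply: leeD2l.
by apply: ereal_inf_lbound; exists x.
Qed.

End real_lemmas.

Section conjugate.
Context {R : realType} {n : nat} (Om : 'cV[R]_n -> \bar R).
Hypotheses (Om_proper : eproper Om) (Om_lsc : lower_semicontinuous Om)
  (Om_convex : econvex Om) (Om_dom : edom Om = @simplex R n)
  (Om_legendre : legendre_on_H Om).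
Implicit Types (q x y z s h : 'cV[R]_n).

Definition om q : R := fine (Om q).
Definition conj_obj s q : R := dotv s q - om q.
Definition is_argmax s q :=
  simplex q /\ forall q', simplex q' -> conj_obj s q' <= conj_obj s q.
Definition Omstar s : R := fine (fconj Om s).

Lemma simplex_Om_lty q : simplex q <-> (Om q < +oo)%E.
Proof. by rewrite -[simplex q]/(@simplex R n q) -Om_dom. Qed.

Lemma OmE q : simplex q -> Om q = (om q)%:E.
Proof.
move=> /simplex_Om_lty q_lty; rewrite /om fineK // fin_numE (Om_proper.1 q).
by rewrite lt_eqF.
Qed.

Lemma Om_pinfty q : ~ simplex q -> Om q = +oo%E.
Proof. by rewrite simplex_Om_lty => /negP; rewrite -leNgt leye_eq => /eqP. Qed.

Lemma n_gt0 : (0 < n)%N.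
Proof. by have [_ [q /simplex_Om_lty /simplex_n_gt0]] := Om_proper. Qed.

Lemma om_convex x y (t : R) : simplex x -> simplex y -> 0 < t < 1 ->
  om (t *: x + (1 - t) *: y) <= t * om x + (1 - t) * om y.
Proof.
move=> sx sy /[dup] t01 /andP[t_gt0 t_lt1].
have sxy : simplex (t *: x + (1 - t) *: y) by apply: simplex_convex; rewrite ?ltW.
by have := Om_convex x y t01; rewrite !OmE // -!EFinM -EFinD lee_fin.
Qed.

Lemma conj_objD s h q : conj_obj (s + h) q = conj_obj s q + dotv h q.
Proof. by rewrite /conj_obj dotvDl addrAC. Qed.

Lemma exists_argmax s : exists qs, is_argmax s qs.
Proof.
have [|qs sqs qs_min] := lower_semicontinuous_compact_min simplex_compact _
  (lower_semicontinuousB Om_lsc (@dotv_continuous R n s)).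
  by have [_ [q /simplex_Om_lty sq]] := Om_proper; exists q.
exists qs; split=> // q sq; have := qs_min q sq.
by rewrite !OmE // -!EFinB lee_fin /conj_obj; lra.
Qed.

Lemma fconj_argmax s qs : is_argmax s qs -> fconj Om s = (conj_obj s qs)%:E.
Proof.
move=> [sqs qs_max]; apply/eqP; rewrite eq_le; apply/andP; split.
  apply: ge_ereal_sup => _ [q _ <-].
  have [sq|nsq] := pselect (simplex q); last by rewrite Om_pinfty //= leNye.
  by rewrite OmE // -EFinB lee_fin; exact: qs_max.
by apply: ereal_sup_ubound; exists qs => //; rewrite OmE // -EFinB.
Qed.

Lemma Omstar_argmax s qs : is_argmax s qs -> Omstar s = conj_obj s qs.
Proof. by move=> /fconj_argmax; rewrite /Omstar => ->. Qed.

Lemma fconjE s : fconj Om s = (Omstar s)%:E.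
Proof. by have [qs qsP] := exists_argmax s; rewrite (fconj_argmax qsP) (Omstar_argmax qsP). Qed.

Lemma conj_obj_le q s : simplex q -> conj_obj s q <= Omstar s.
Proof. by have [qs qsP] := exists_argmax s; rewrite (Omstar_argmax qsP); apply: qsP.2. Qed.

Lemma Omstar_const s (c : R) : (forall q, simplex q -> dotv s q = c) ->
  Omstar s = Omstar 0 + c.
Proof.
move=> s_const; have obj_shift q : simplex q -> conj_obj s q = conj_obj 0 q + c.
  by move=> sq; rewrite /conj_obj s_const // dotv0l; ring.
have [q0 [sq0 q0_max]] := exists_argmax 0; have [qs [sqs qs_max]] := exists_argmax s.
rewrite (@Omstar_argmax 0 q0) // (@Omstar_argmax s qs) //.
have := q0_max qs sqs; have := qs_max q0 sq0; rewrite !obj_shift //; lra.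
Qed.

Lemma gradH_sum0 x g : gradH Om x g -> \sum_(i < n) g i 0 = 0.
Proof.
(* projV0 kills constant vectors, so the restriction is constant along them *)
move=> [df dfE]; rewrite -[LHS]mul1r -dotv_const -dfE -deriveE //.
rewrite /derive [X in lim (X @ _)](_ : _ = cst 0) ?lim_cst //; apply/funext => h /=.
by rewrite addr0 projV0_const ?n_gt0 // projV0_0 subrr scaler0.
Qed.

Lemma gradH_subgrad x g z : simplex x -> gradH Om x g -> simplex z ->
  om x + dotv g (z - x) <= om z.
Proof.
move=> sx /has_gradP approx sz; set v := z - x.
have v_le1 : `|v| <= 1 := simplex_dist_le1 sz sx.
have xvz : x + v = z by rewrite /v addrC subrK.
pose phi t := om (x + t *: v).
suff : dotv g v <= phi 1 - phi 0 by rewrite /phi scale1r scale0r addr0 xvz; lra.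
apply: convex_slope_le => [t t01|eps eps0].
  rewrite /phi scale1r scale0r addr0 xvz.
  have -> : x + t *: v = t *: z + (1 - t) *: x.
    by apply/matrixP => i j; rewrite /v !mxE; ring.
  by rewrite [leRHS]addrC; exact: om_convex.
have [del del0 near0] := approx eps eps0.
exists del => // t /andP[t0 tdel].
have tv_le_t : t * `|v| <= t by nra.
have tv : `|t *: v| < del.
  by rewrite normrZ gtr0_norm // (le_lt_trans tv_le_t).
rewrite /phi scale0r addr0.
have := near0 _ tv; rewrite add0r projV0_0 addr0 projV0_id; last first.
  by under eq_bigr do rewrite mxE; rewrite -mulr_sumr simplex_sumB ?mulr0.
rewrite dotvZr normrZ gtr0_norm // => /le_trans; apply; nra.
Qed.

Lemma argmax_grad_ge s qs b (t : R) g : is_argmax s qs -> simplex b -> 0 < t <= 1 ->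
  gradH Om (qs + t *: (b - qs)) g -> dotv s (b - qs) <= dotv g (b - qs).
Proof.
move=> [sqs qs_max] sb /andP[t0 t1] gH.
have su : simplex (qs + t *: (b - qs)).
  have -> : qs + t *: (b - qs) = t *: b + (1 - t) *: qs.
    by apply/matrixP => i j; rewrite !mxE; ring.
  by apply: simplex_convex => //; rewrite t1 ltW.
have := gradH_subgrad su gH sqs; have := qs_max _ su.
have -> : qs - (qs + t *: (b - qs)) = (- t) *: (b - qs).
  by rewrite opprD addrA subrr add0r scaleNr.
rewrite /conj_obj dotvDr !dotvZr => obj_le sub_le.
have : t * dotv s (b - qs) <= t * dotv g (b - qs) by lra.
by rewrite ler_pM2l.
Qed.

Lemma gradH_coord_le x g j : simplex x -> gradH Om x g ->
  g j 0 <= om (delta_mx j 0) - om x - dotv g (barycenter - x).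
Proof.
move=> sx gH; have := gradH_subgrad sx gH (simplex_delta j).
by rewrite !dotvBr dotv_delta dotv_const (gradH_sum0 gH) mulr0; lra.
Qed.

Lemma argmax_segment_grad_le s qs (t : R) g j : is_argmax s qs -> 0 < t <= 1 ->
  gradH Om (qs + t *: (barycenter - qs)) g ->
  g j 0 <= \sum_(i < n) `|om (delta_mx i 0)| + `|Omstar 0|
           + `|dotv s (barycenter - qs)|.
Proof.
move=> qsP /[dup] t01 /andP[t0 t1] gH; have [sqs _] := qsP.
have rb : relint_simplex (@barycenter R n) := relint_barycenter n_gt0.
set b := barycenter in rb gH *; set u := qs + _ in gH *.
have su : simplex u := relint_simplexW (relint_segment sqs rb t01).
have := gradH_coord_le j su gH; have := argmax_grad_ge qsP (relint_simplexW rb) t01 gH.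
have -> : b - u = (1 - t) *: (b - qs) by apply/matrixP => i k; rewrite !mxE; ring.
have := conj_obj_le 0 su; rewrite /conj_obj dotv0l dotvZr.
have : om (delta_mx j 0) <= \sum_(i < n) `|om (delta_mx i 0)|.
  by rewrite (bigD1 j) //= (le_trans (ler_norm _)) // lerDl sumr_ge0.
have := ler_norm (Omstar 0); have := ler_norm (- dotv s (b - qs)); rewrite normrN.
have := normr_ge0 (dotv s (b - qs)); nra.
Qed.

Lemma argmax_relint s qs : is_argmax s qs -> relint_simplex qs.
Proof.
move=> qsP; have [sqs _] := qsP; apply: contrapT => qs_boundary.
have [_ [_ [grad_exists grad_blowup]]] := Om_legendre.
have rb : relint_simplex (@barycenter R n) := relint_barycenter n_gt0.
have t_in k : 0 < (k.+1%:R^-1 : R) <= 1 by rewrite invr_gt0 ltr0n invf_le1 ?ler1n.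
pose u k := qs + k.+1%:R^-1 *: (barycenter - qs).
have u_relint k : relint_simplex (u k) := relint_segment sqs rb (t_in k).
have [g gP] := choice (fun k => grad_exists _ (u_relint k)).
have u_cvg : u @ \oo --> qs.
  rewrite -[X in _ --> X]addr0 -(scale0r (barycenter - qs)).
  by apply: cvgD; [exact: cvg_cst | apply: cvgZ; [exact: cvg_harmonic | exact: cvg_cst]].
set U := \sum_(i < n) `|om (delta_mx i 0)| + `|Omstar 0|
         + `|dotv s (barycenter - qs)|.
have g_bounded k : Num.sqrt (dotv (g k) (g k)) <= 2 * n%:R * U.
  apply: sum0_norm_le (gradH_sum0 (gP k)) _ _ => [|j].
    by rewrite !addr_ge0 ?sumr_ge0.
  exact: argmax_segment_grad_le qsP (t_in k) (gP k).
have /cvgryPgt/(_ (2 * n%:R * U)) [N _ /(_ N (leqnn N))] :=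
  grad_blowup u g qs u_relint gP u_cvg sqs qs_boundary.
by rewrite ltNge g_bounded.
Qed.

Lemma argmax_unique s q1 q2 : is_argmax s q1 -> is_argmax s q2 -> q1 = q2.
Proof.
move=> q1P q2P; apply: contrapT => /eqP q12.
have [[sq1 q1_max] [sq2 q2_max]] := (q1P, q2P).
have half : 0 < (2^-1 : R) < 1 by rewrite invr_gt0 ltr0n invf_lt1 ?ltr1n.
have smid : simplex (2^-1 *: q1 + (1 - 2^-1) *: q2).
  by apply: simplex_convex => //; case/andP: half => /ltW -> /ltW ->.
have [strictly_convex _] := Om_legendre.
have := strictly_convex _ _ _ (argmax_relint q1P) (argmax_relint q2P) q12 half.
rewrite !OmE // -!EFinM -EFinD lte_fin.
have := q1_max _ smid; have := q1_max _ sq2; have := q2_max _ sq1.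
by rewrite /conj_obj dotvDr !dotvZr; lra.
Qed.

Lemma argmax_gap s qs (ep : R) : is_argmax s qs -> 0 < ep ->
  exists2 d0 : R, 0 < d0 & forall q, simplex q -> ep <= `|q - qs| ->
    conj_obj s q + d0 <= conj_obj s qs.
Proof.
move=> qsP ep0; set K := @simplex R n `&` [set q | ep <= `|q - qs|].
have [[p Kp]|K0] := pselect (K !=set0); last first.
  by exists 1 => // q sq far; exfalso; apply: K0; exists q.
have K_compact : compact K.
  apply: (compact_closedI simplex_compact).
  apply: (@preimage_closed _ _ (Num.norm \o (fun q => q - qs)) [set r | ep <= r]).
    move=> q _; apply: continuous_comp; last exact: norm_continuous.
    by apply: continuousB; [exact: cvg_id | exact: cst_continuous].
  exact: closed_ge.
have [x [sx farx] x_min] := lower_semicontinuous_compact_min K_compact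
  (ex_intro _ p Kp) (lower_semicontinuousB Om_lsc (@dotv_continuous R n s)).
have x_lt : conj_obj s x < conj_obj s qs.
  rewrite ltNge; apply/negP => qs_le_x.
  have xP : is_argmax s x by split=> // q /qsP.2 /le_trans; apply.
  by move: farx; rewrite /= (argmax_unique xP qsP) subrr normr0 leNgt ep0.
exists (conj_obj s qs - conj_obj s x) => [|q sq farq]; first by rewrite subr_gt0.
have := x_min q (conj sq farq).
by rewrite !OmE // -!EFinB lee_fin /conj_obj; lra.
Qed.

Lemma argmax_near s qs (ep : R) : is_argmax s qs -> 0 < ep ->
  exists2 del : R, 0 < del & forall h qh, `|h| < del -> is_argmax (s + h) qh ->
    `|qh - qs| < ep.
Proof.
move=> qsP ep0; have [d0 d0_gt0 gap] := argmax_gap qsP ep0.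
have n1 : 0 < n%:R + 1 :> R by rewrite ltr_wpDl.
exists (d0 / (n%:R + 1)) => [|h qh hdel [sqh qh_max]]; first by rewrite divr_gt0.
rewrite ltNge; apply/negP => /(gap _ sqh) far.
have := qh_max qs qsP.1; rewrite !conj_objD.
have := dotv_le_norm h (qh - qs); rewrite dotvBr => /(le_trans (ler_norm _)).
have := simplex_dist_le1 sqh qsP.1.
have : `|h| * (n%:R + 1) < d0 by rewrite -ltr_pdivlMr.
have : 0 <= n%:R * `|h| by rewrite mulr_ge0.
have := normr_ge0 h; nra.
Qed.

Lemma has_grad_Omstar s qs : is_argmax s qs -> has_grad Omstar s qs.
Proof.
move=> qsP; apply/has_gradP => eps eps0.
have n1 : 0 < n%:R + 1 :> R by rewrite ltr_wpDl.
have [del del0 near_qs] := argmax_near qsP (divr_gt0 eps0 n1).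
exists del => // h hdel; have [qh qhP] := exists_argmax (s + h).
have := near_qs h qh hdel qhP; rewrite ltr_pdivlMr // => qh_near.
rewrite (Omstar_argmax qsP) (Omstar_argmax qhP) conj_objD (dotvC qs h).
have lower := qhP.2 qs qsP.1; rewrite !conj_objD in lower.
have upper := qsP.2 qh qhP.1.
have := le_trans (ler_norm _) (dotv_le_norm h (qh - qs)); rewrite dotvBr.
have := normr_ge0 h; have := normr_ge0 (qh - qs).
by rewrite ger0_norm; [nra | lra].
Qed.

End conjugate.

Section marginal.
Context {R : realType} {n d : nat} (Om : 'cV[R]_n -> \bar R) (Y : 'M[R]_(d, n)).
Hypotheses (Om_proper : eproper Om) (Om_lsc : lower_semicontinuous Om)
  (Om_convex : econvex Om) (Om_dom : edom Om = @simplex R n)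
  (Om_legendre : legendre_on_H Om).
Implicit Types (q : 'cV[R]_n) (th w mu : 'cV[R]_d).
Local Notation OC := (OmegaC Y Om).
Local Notation om := (om Om).
Local Notation Omstar := (Omstar Om).

Definition fiber_minimizer q :=
  forall q', simplex q' -> Y *m q' = Y *m q -> (Om q <= Om q')%E.

Lemma OmegaC_le q : simplex q -> (OC (Y *m q) <= Om q)%E.
Proof. by move=> sq; apply: ereal_inf_lbound; exists q. Qed.

Lemma OmegaC_ge th mu : ((dotv th mu - Omstar (Y^T *m th))%:E <= OC mu)%E.
Proof.
apply: le_ereal_inf_tmp => _ [q [sq <-] <-]; rewrite (OmE Om_proper Om_dom) // lee_fin.
have := conj_obj_le Om_proper Om_lsc Om_dom (Y^T *m th) sq.
by rewrite /conj_obj dotv_trmx; lra.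
Qed.

Lemma OmegaCE q : simplex q -> OC (Y *m q) = (fine (OC (Y *m q)))%:E.
Proof.
move=> sq; have := OmegaC_le sq; have := OmegaC_ge 0 (Y *m q).
by rewrite (OmE Om_proper Om_dom) //; case: (OC _).
Qed.

Lemma fconj_OmegaC th : fconj OC th = (Omstar (Y^T *m th))%:E.
Proof.
have [qs qsP] := exists_argmax Om_proper Om_lsc Om_dom (Y^T *m th).
apply/eqP; rewrite eq_le; apply/andP; split.
  apply: ge_ereal_sup => _ [mu _ <-].
  rewrite -[Omstar _](subKr (dotv th mu)) EFinB.
  by apply: leeB; [exact: lexx | exact: OmegaC_ge].
apply: le_ereal_sup_tmp; exists ((dotv th (Y *m qs))%:E - OC (Y *m qs))%E.
  by exists (Y *m qs).
rewrite (Omstar_argmax Om_proper Om_dom qsP) /conj_obj dotv_trmx EFinB.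
apply: leeB; first exact: lexx.
by rewrite -(OmE Om_proper Om_dom qsP.1); exact: OmegaC_le qsP.1.
Qed.

Lemma Vperp_dotv w i0 : Vperp Y w ->
  forall q, simplex q -> dotv (Y^T *m w) q = dotv w (col i0 Y).
Proof.
move=> wV q [_ q1]; rewrite [dotv _ q]/dotv -[RHS]mulr1 -q1 mulr_sumr.
apply: eq_bigr => i _.
have <- : dotv w (col i Y) = dotv w (col i0 Y).
  by apply/eqP; rewrite -subr_eq0 -dotvBr wV.
by congr (_ * _); rewrite mxE /dotv; apply: eq_bigr => k _; rewrite !mxE mulrC.
Qed.

Lemma fconj_OmegaC_Vperp w1 w2 (t : R) : Vperp Y w1 -> Vperp Y w2 ->
  fconj OC (t *: w1 + (1 - t) *: w2) =
  (t%:E * fconj OC w1 + (1 - t)%:E * fconj OC w2)%E.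
Proof.
move=> V1 V2; pose i0 := Ordinal (n_gt0 Om_proper Om_dom).
rewrite !fconj_OmegaC -!EFinM -EFinD; congr EFin.
have comb q : simplex q -> dotv (Y^T *m (t *: w1 + (1 - t) *: w2)) q =
    t * dotv w1 (col i0 Y) + (1 - t) * dotv w2 (col i0 Y).
  by move=> sq; rewrite mulmxDr -!scalemxAr dotvDl !dotvZl !(Vperp_dotv i0).
rewrite !(Omstar_const Om_proper Om_lsc Om_dom comb).
rewrite (Omstar_const Om_proper Om_lsc Om_dom (Vperp_dotv i0 V1)).
by rewrite (Omstar_const Om_proper Om_lsc Om_dom (Vperp_dotv i0 V2)); ring.
Qed.

Lemma has_grad_fconj_OmegaC th qs : is_argmax Om (Y^T *m th) qs ->
  has_grad (fun t => fine (fconj OC t)) th (Y *m qs).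
Proof.
move=> qsP; under eq_fun do rewrite fconj_OmegaC /=.
exact/has_grad_trmx_comp/(has_grad_Omstar Om_proper Om_lsc Om_convex Om_dom Om_legendre).
Qed.

Lemma differentiable_fconj_OmegaC th : differentiable (fun t => fine (fconj OC t)) th.
Proof.
have [qs qsP] := exists_argmax Om_proper Om_lsc Om_dom (Y^T *m th).
by case: (has_grad_fconj_OmegaC qsP).
Qed.

Lemma OmegaC_eq_iff q : simplex q -> Om q = OC (Y *m q) <-> fiber_minimizer q.
Proof.
move=> sq; split=> [Oq q' sq' Yq'|q_min].
  by rewrite Oq -Yq'; apply: ereal_inf_lbound; exists q'.
apply/eqP; rewrite eq_le OmegaC_le // andbT.
by apply: le_ereal_inf_tmp => _ [q' [sq' Yq'] <-]; exact: q_min.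
Qed.

Lemma om_eq_OmegaC_iff q :
  simplex q -> om q = fine (OC (Y *m q)) <-> fiber_minimizer q.
Proof.
move=> sq; rewrite -OmegaC_eq_iff // (OmE Om_proper Om_dom sq) OmegaCE //.
by split=> [->|[]].
Qed.

Lemma FYloss_OmegaDE th q : simplex q ->
  FYloss Om (Y^T *m th) q = (om q)%:E + (Omstar (Y^T *m th) - dotv th (Y *m q))%:E.
Proof.
move=> sq; rewrite /FYloss (OmE Om_proper Om_dom) // (fconjE Om_proper Om_lsc Om_dom).
by rewrite dotv_trmx EFinB addeA.
Qed.

Lemma FYloss_OmegaCE th q : simplex q ->
  FYloss OC th (Y *m q) =
  (fine (OC (Y *m q)))%:E + (Omstar (Y^T *m th) - dotv th (Y *m q))%:E.
Proof. by move=> sq; rewrite /FYloss OmegaCE // fconj_OmegaC EFinB addeA. Qed.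

Lemma FYloss_OmegaC_le th q : simplex q ->
  (FYloss OC th (Y *m q) <= FYloss Om (Y^T *m th) q)%E.
Proof.
move=> sq; rewrite FYloss_OmegaDE // FYloss_OmegaCE // leeD2r //.
by rewrite -(OmE Om_proper Om_dom sq) -OmegaCE // OmegaC_le.
Qed.

Lemma FYloss_eq_iff th q : simplex q ->
  FYloss Om (Y^T *m th) q = FYloss OC th (Y *m q) <-> fiber_minimizer q.
Proof.
move=> sq; rewrite FYloss_OmegaDE // FYloss_OmegaCE // -om_eq_OmegaC_iff //.
by split=> [/eqP|->//]; rewrite -!EFinD => /eqP[]; lra.
Qed.

Lemma ereal_inf_FYloss_rest q : simplex q -> exists r : R,
  ereal_inf [set (Omstar (Y^T *m th) - dotv th (Y *m q))%:E | th in [set: 'cV[R]_d]]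
  = r%:E.
Proof.
move=> sq; set I := ereal_inf _.
have lb : ((- om q)%:E <= I)%E.
  apply: le_ereal_inf_tmp => _ [th _ <-]; rewrite lee_fin.
  have := conj_obj_le Om_proper Om_lsc Om_dom (Y^T *m th) sq.
  by rewrite /conj_obj dotv_trmx; lra.
have ub : (I <= (Omstar (Y^T *m 0) - dotv 0 (Y *m q))%:E)%E.
  by apply: ereal_inf_lbound; exists 0.
by move: lb ub; case: I => [r _ _|//|//]; exists r.
Qed.

Lemma ereal_inf_FYloss_le q : simplex q ->
  (ereal_inf [set FYloss OC th (Y *m q) | th in [set: 'cV[R]_d]]
   <= ereal_inf [set FYloss Om (Y^T *m th) q | th in [set: 'cV[R]_d]])%E.
Proof.
move=> sq; apply: le_ereal_inf_tmp => _ [th _ <-].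
by apply: le_trans (FYloss_OmegaC_le th sq); apply: ereal_inf_lbound; exists th.
Qed.

Lemma ereal_inf_FYloss_eq_iff q : simplex q ->
  ereal_inf [set FYloss Om (Y^T *m th) q | th in [set: 'cV[R]_d]]
  = ereal_inf [set FYloss OC th (Y *m q) | th in [set: 'cV[R]_d]]
  <-> fiber_minimizer q.
Proof.
move=> sq; rewrite -om_eq_OmegaC_iff //.
rewrite (eq_imagel (fun th _ => FYloss_OmegaDE th sq)).
rewrite (eq_imagel (fun th _ => FYloss_OmegaCE th sq)) !ereal_inf_addl.
have [r ->] := ereal_inf_FYloss_rest sq.
by split=> [/eqP|->//]; rewrite -!EFinD => /eqP[]; lra.
Qed.

Lemma has_grad_FYloss_OmegaD th q qs : simplex q -> is_argmax Om (Y^T *m th) qs ->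
  has_grad (fun t => fine (FYloss Om (Y^T *m t) q)) th (Y *m (qs - q)).
Proof.
move=> sq qsP; under eq_fun do rewrite FYloss_OmegaDE // -EFinD /= addrA.
rewrite mulmxBr; apply: has_grad_affine.
exact/has_grad_trmx_comp/(has_grad_Omstar Om_proper Om_lsc Om_convex Om_dom Om_legendre).
Qed.

Lemma has_grad_FYloss_OmegaC th q qs : simplex q -> is_argmax Om (Y^T *m th) qs ->
  has_grad (fun t => fine (FYloss OC t (Y *m q))) th (Y *m (qs - q)).
Proof.
move=> sq qsP; under eq_fun do rewrite FYloss_OmegaCE // -EFinD /= addrA.
rewrite mulmxBr; apply: has_grad_affine.
exact/has_grad_trmx_comp/(has_grad_Omstar Om_proper Om_lsc Om_convex Om_dom Om_legendre).
Qed.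

End marginal.

Theorem proposition6 (R : realType) (d n : nat) (Y : 'M[R]_(d, n))
  (OmegaD : 'cV[R]_n -> \bar R)
  (* the columns of Y are the (distinct) elements of the finite set Y *)
  (Yinj : forall i j : 'I_n, col i Y = col j Y -> i = j)
  (* no element of Y is a convex combination of the others *)
  (Yext : forall i : 'I_n,
     ~ (exists q : 'cV[R]_n, simplex q /\ q i 0 = 0 /\ Y *m q = col i Y))
  (Hproper : eproper OmegaD)
  (Hlsc : lower_semicontinuous OmegaD)
  (Hconv : econvex OmegaD)
  (Hdom : edom OmegaD = simplex (R := R) (n := n))
  (Hleg : legendre_on_H OmegaD) :
  let OC := OmegaC Y OmegaD in
  let minimizer (q : 'cV[R]_n) :=
    forall q', simplex q' -> Y *m q' = Y *m q -> (OmegaD q <= OmegaD q')%E in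
  (* (1) *)
  (forall (theta : 'cV[R]_d) (q : 'cV[R]_n),
     dotv (Y^T *m theta) q = dotv theta (Y *m q)) /\
  (* (2) *)
  ((forall theta : 'cV[R]_d, fconj OC theta = fconj OmegaD (Y^T *m theta)) /\
   (forall theta : 'cV[R]_d, (fconj OC theta < +oo)%E) /\
   (forall theta : 'cV[R]_d, differentiable (fun t => fine (fconj OC t)) theta) /\
   (forall (w1 w2 : 'cV[R]_d) (t : R), Vperp Y w1 -> Vperp Y w2 ->
      fconj OC (t *: w1 + (1 - t) *: w2) =
      (t%:E * fconj OC w1 + (1 - t)%:E * fconj OC w2)%E)) /\
  (* (3) *)
  (forall (theta : 'cV[R]_d) (q : 'cV[R]_n), simplex q ->
     (OC (Y *m q) <= OmegaD q)%E /\
     (FYloss OC theta (Y *m q) <= FYloss OmegaD (Y^T *m theta) q)%E /\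
     (OmegaD q = OC (Y *m q) <-> minimizer q) /\
     (FYloss OmegaD (Y^T *m theta) q = FYloss OC theta (Y *m q) <-> minimizer q)) /\
  (* (4) *)
  (forall q : 'cV[R]_n, simplex q ->
     (ereal_inf [set FYloss OC th (Y *m q) | th in [set: 'cV[R]_d]]
      <= ereal_inf [set FYloss OmegaD (Y^T *m th) q | th in [set: 'cV[R]_d]])%E /\
     (ereal_inf [set FYloss OmegaD (Y^T *m th) q | th in [set: 'cV[R]_d]]
      = ereal_inf [set FYloss OC th (Y *m q) | th in [set: 'cV[R]_d]]
      <-> minimizer q)) /\
  (* (5) *)
  (forall (theta : 'cV[R]_d) (q : 'cV[R]_n), simplex q ->
     exists (gD : 'cV[R]_n) (gC : 'cV[R]_d),
       has_grad (fun s => fine (fconj OmegaD s)) (Y^T *m theta) gD /\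
       has_grad (fun t => fine (fconj OC t)) theta gC /\
       has_grad (fun t => fine (FYloss OmegaD (Y^T *m t) q)) theta (Y *m (gD - q)) /\
       has_grad (fun t => fine (FYloss OC t (Y *m q))) theta (Y *m (gD - q)) /\
       Y *m (gD - q) = gC - Y *m q).
Proof.
move=> OC minimizer.
split; first exact: dotv_trmx.
split.
  split; first by move=> th; rewrite fconj_OmegaC // fconjE.
  split; first by move=> th; rewrite fconj_OmegaC // ltry.
  split; last by move=> w1 w2 t; apply: fconj_OmegaC_Vperp.
  by move=> th; apply: differentiable_fconj_OmegaC.
split.
  move=> th q sq; split; first exact: OmegaC_le.
  split; first exact: FYloss_OmegaC_le.
  by split; [apply: OmegaC_eq_iff | apply: FYloss_eq_iff].
split.
  move=> q sq; split; first exact: ereal_inf_FYloss_le.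
  exact: ereal_inf_FYloss_eq_iff.
move=> th q sq; have [qs qsP] := exists_argmax Hproper Hlsc Hdom (Y^T *m th).
exists qs, (Y *m qs); split; first exact: has_grad_Omstar qsP.
split; first exact: has_grad_fconj_OmegaC qsP.
split; first exact: has_grad_FYloss_OmegaD sq qsP.
split; first exact: has_grad_FYloss_OmegaC sq qsP.
exact: mulmxBr.
Qed.
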